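(* Let $\mathcal{T}=[t_{i,j,k}]\in\mathrm{Sym}(2,3)$. If $\mathcal{T}$ has a best rank one approximation that is not symmetric, then $\mathcal{T}$ is a nonzero scalar multiple of the tensor $\mathcal{T}_\theta\in\mathrm{Sym}(2,3)$ with entries $t_{1,1,1}=\cos\theta$, $t_{1,1,2}=\sin\theta$, $t_{1,2,2}=-\cos\theta$, $t_{2,2,2}=-\sin\theta$ (the remaining entries determined by symmetry) for some $\theta\in[0,2\pi)$. Moreover, for $\mathcal{T}=\mathcal{T}_\theta$: for arbitrary $\mathbf{u},\mathbf{v}\in\mathrm{S}^1$ there is a vector $\mathbf{w}(\mathbf{u},\mathbf{v})\in\mathrm{S}^1$, uniquely determined by $\mathbf{u},\mathbf{v}$, such that $\mathbf{u}\otimes\mathbf{v}\otimes\mathbf{w}(\mathbf{u},\mathbf{v})$ is a best rank one approximation of $\mathcal{T}_\theta$; and $\mathcal{T}_\theta$ has exactly three (distinct) symmetric best rank one approximations.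
   Context: $\mathrm{Sym}(2,3)$ is the space of real tensors $[t_{i,j,k}]_{i,j,k=1}^2$ invariant under all permutations of indices. $\mathrm{S}^1$ is the unit circle in $\mathbb{R}^2$. Inner product $\langle\mathcal{S},\mathcal{T}\rangle=\sum s_{i,j,k}t_{i,j,k}$, norm $\|\mathcal{T}\|=\sqrt{\langle\mathcal{T},\mathcal{T}\rangle}$. A best rank one approximation of $\mathcal{T}$ is a tensor $a\,\mathbf{x}\otimes\mathbf{y}\otimes\mathbf{z}$ ($a\in\mathbb{R}$, $\mathbf{x},\mathbf{y},\mathbf{z}\in\mathrm{S}^1$) minimizing $\|\mathcal{T}-s\,\mathbf{x}'\otimes\mathbf{y}'\otimes\mathbf{z}'\|$ over $s\in\mathbb{R}$, $\mathbf{x}',\mathbf{y}',\mathbf{z}'\in\mathrm{S}^1$. It is symmetric if it is a symmetric tensor, i.e. of the form $b\,\mathbf{u}\otimes\mathbf{u}\otimes\mathbf{u}$. *)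

From Stdlib Require Import Reals.
Open Scope R_scope.

Inductive idx : Set := i1 | i2.

Definition vec := idx -> R.
Definition tensor := idx -> idx -> idx -> R.

Definition sum2 (f : idx -> R) : R := f i1 + f i2.

Definition in_S1 (x : vec) : Prop := x i1 ^ 2 + x i2 ^ 2 = 1.

Definition is_sym (T : tensor) : Prop :=
  forall i j k,
    T i j k = T i k j /\ T i j k = T j i k /\ T i j k = T j k i /\
    T i j k = T k i j /\ T i j k = T k j i.

Definition inner (S T : tensor) : R :=
  sum2 (fun i => sum2 (fun j => sum2 (fun k => S i j k * T i j k))).

Definition tnorm (T : tensor) : R := sqrt (inner T T).

Definition tsub (S T : tensor) : tensor := fun i j k => S i j k - T i j k.

Definition tscale (c : R) (T : tensor) : tensor := fun i j k => c * T i j k.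

Definition rank1 (a : R) (x y z : vec) : tensor :=
  fun i j k => a * x i * y j * z k.

Definition best_rank1 (T B : tensor) : Prop :=
  (exists a x y z, in_S1 x /\ in_S1 y /\ in_S1 z /\ B = rank1 a x y z) /\
  (forall s x' y' z', in_S1 x' -> in_S1 y' -> in_S1 z' ->
     tnorm (tsub T B) <= tnorm (tsub T (rank1 s x' y' z'))).

Definition Ttheta (theta : R) : tensor :=
  fun i j k =>
    match i, j, k with
    | i1, i1, i1 => cos theta
    | i1, i1, i2 | i1, i2, i1 | i2, i1, i1 => sin theta
    | i1, i2, i2 | i2, i1, i2 | i2, i2, i1 => - cos theta
    | i2, i2, i2 => - sin theta
    end.

(* A best rank one approximation of T is [g x (x) y (x) z] where (x, y, z) maximizes
   |T(x, y, z)| on the product of circles and g = T(x, y, z).  The first-order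
   conditions make the slice T(., ., z) swap x and y up to the factor g, so it has
   eigenvectors x + y and x - y with eigenvalues g and -g; hence its trace vanishes.
   When x and y are not parallel this holds at z and, via the new maximizers built
   from x + y and x - y, in a second independent direction, so the trace vector
   T(e_i, e_i, .) of T is zero; a traceless symmetric tensor is a multiple of some
   T_theta.  Conversely every slice T_theta(u, v, .) is a unit vector, which gives
   the unique third factor, and in coordinates rotated by theta/3 the cubic form of
   T_theta is Re (p1 + i p2)^3, which equals 1 on the circle at exactly three points. *)

From Stdlib Require Import Reals Lra Psatz FunctionalExtensionality.
Open Scope R_scope.

Definition mkv (x1 x2 : R) : vec := fun i => match i with i1 => x1 | i2 => x2 end.
Definition vscale (c : R) (x : vec) : vec := fun i => c * x i.
Definition axpy (a : R) (u x : vec) : vec := fun i => x i + a * u i.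
Definition dot (x y : vec) : R := sum2 (fun i => x i * y i).
Definition nrm (x : vec) : R := dot x x.
Definition det (x y : vec) : R := x i1 * y i2 - x i2 * y i1.

Definition tform (T : tensor) (x y z : vec) : R :=
  sum2 (fun i => sum2 (fun j => sum2 (fun k => T i j k * x i * y j * z k))).

Lemma vec_ext (x y : vec) : x i1 = y i1 -> x i2 = y i2 -> x = y.
Proof. intros H1 H2; extensionality i; destruct i; assumption. Qed.

Lemma tensor_ext (S T : tensor) : (forall i j k, S i j k = T i j k) -> S = T.
Proof. intros H; extensionality i; extensionality j; extensionality k; apply H. Qed.

Lemma in_S1_nrm (x : vec) : in_S1 x <-> nrm x = 1.
Proof. unfold in_S1, nrm, dot, sum2; split; intros H; rewrite <- H; ring. Qed.

Lemma cos_sin_in_S1 (th : R) : in_S1 (mkv (cos th) (sin th)).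
Proof. unfold in_S1, mkv; rewrite <- (sin2_cos2 th); unfold Rsqr; ring. Qed.

Lemma scalar_zero_of_in_S1 (c : R) (z : vec) :
  in_S1 z -> c * z i1 = 0 -> c * z i2 = 0 -> c = 0.
Proof.
  unfold in_S1; intros Hz H1 H2.
  transitivity (c * (z i1 ^ 2 + z i2 ^ 2)); [rewrite Hz; ring |].
  replace (c * (z i1 ^ 2 + z i2 ^ 2)) with ((c * z i1) * z i1 + (c * z i2) * z i2) by ring.
  rewrite H1, H2; ring.
Qed.

Lemma polar_vec (p : vec) : exists n q, 0 <= n /\ in_S1 q /\ p = vscale n q.
Proof.
  destruct (Req_dec (nrm p) 0) as [H0 | Hn].
  - exists 0, (mkv 1 0); split; [lra | split; [unfold in_S1, mkv; ring |]].
    unfold nrm, dot, sum2 in H0.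
    apply vec_ext; unfold vscale; nra.
  - assert (Hpos : 0 < nrm p) by (unfold nrm, dot, sum2 in *; nra).
    set (n := sqrt (nrm p)).
    assert (Hn0 : 0 < n) by (apply sqrt_lt_R0; exact Hpos).
    assert (Hn2 : n * n = nrm p) by (apply sqrt_sqrt; lra).
    exists n, (vscale (/ n) p); split; [lra | split].
    + unfold in_S1, vscale. unfold nrm, dot, sum2 in Hn2.
      replace ((/ n * p i1) ^ 2 + (/ n * p i2) ^ 2) with ((p i1 * p i1 + p i2 * p i2) / (n * n))
        by (field; lra).
      rewrite <- Hn2; field; lra.
    + apply vec_ext; unfold vscale; field; lra.
Qed.

Lemma angle_of_in_S1 (p : vec) :
  in_S1 p -> exists th, 0 <= th < 2 * PI /\ p = mkv (cos th) (sin th).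
Proof.
  unfold in_S1; intros H.
  assert (Hs : sqrt (1 - (p i1)²) = Rabs (p i2)).
  { replace (1 - (p i1)²) with ((p i2)²) by (unfold Rsqr; lra). apply sqrt_Rsqr_abs. }
  assert (Hp : -1 <= p i1 <= 1) by nra.
  pose proof PI_RGT_0.
  destruct (Rle_or_lt 0 (p i2)) as [Hq | Hq].
  - exists (acos (p i1)); pose proof (acos_bound (p i1)); split; [lra |].
    apply vec_ext; simpl.
    + rewrite cos_acos; auto.
    + rewrite sin_acos, Hs by auto; symmetry; apply Rabs_right; lra.
  - assert (Hp' : -1 < p i1 < 1) by nra.
    pose proof (acos_bound_lt (p i1) Hp').
    exists (2 * PI - acos (p i1)); split; [lra |].
    apply vec_ext; simpl;
      rewrite ?cos_minus, ?sin_minus, cos_2PI, sin_2PI, ?cos_acos, ?sin_acos, ?Hs by auto;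
      [ring | rewrite Rabs_left by auto; ring].
Qed.

Definition tform_le (T : tensor) (K : R) : Prop :=
  forall x y z, in_S1 x -> in_S1 y -> in_S1 z -> tform T x y z ^ 2 <= K.

Lemma inner_self_ge0 (T : tensor) : 0 <= inner T T.
Proof. unfold inner, sum2; repeat apply Rplus_le_le_0_compat; apply Rle_0_sqr. Qed.

Lemma tnorm_le_iff (S T : tensor) : tnorm S <= tnorm T <-> inner S S <= inner T T.
Proof.
  unfold tnorm; split; intros H.
  - apply sqrt_le_0; auto using inner_self_ge0.
  - apply sqrt_le_1_alt; exact H.
Qed.

Lemma inner_sub_rank1 (T : tensor) (s : R) (x y z : vec) :
  inner (tsub T (rank1 s x y z)) (tsub T (rank1 s x y z))
  = inner T T - 2 * s * tform T x y z + s ^ 2 * (nrm x * nrm y * nrm z).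
Proof. unfold inner, tsub, rank1, tform, nrm, dot, sum2; ring. Qed.

Lemma best_rank1_rank1 (T : tensor) (a : R) (x y z : vec) :
  in_S1 x -> in_S1 y -> in_S1 z ->
  best_rank1 T (rank1 a x y z) <-> a = tform T x y z /\ tform_le T (tform T x y z ^ 2).
Proof.
  intros Hx Hy Hz.
  assert (Hdist : forall s x' y' z', in_S1 x' -> in_S1 y' -> in_S1 z' ->
    inner (tsub T (rank1 s x' y' z')) (tsub T (rank1 s x' y' z'))
    = inner T T - 2 * s * tform T x' y' z' + s ^ 2).
  { intros s x' y' z' H1 H2 H3; rewrite inner_sub_rank1.
    apply in_S1_nrm in H1, H2, H3; rewrite H1, H2, H3; ring. }
  set (g := tform T x y z).
  split.
  - intros [_ Hbest].
    assert (Hle : forall s x' y' z', in_S1 x' -> in_S1 y' -> in_S1 z' ->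
      - 2 * a * g + a ^ 2 <= - 2 * s * tform T x' y' z' + s ^ 2).
    { intros s x' y' z' H1 H2 H3.
      pose proof (proj1 (tnorm_le_iff _ _) (Hbest s x' y' z' H1 H2 H3)) as H.
      rewrite !Hdist in H by assumption; unfold g; lra. }
    assert (Ha : a = g) by (specialize (Hle g x y z Hx Hy Hz); fold g in Hle; nra).
    split; [exact Ha |].
    intros x' y' z' H1 H2 H3; specialize (Hle (tform T x' y' z') x' y' z' H1 H2 H3).
    subst a; lra.
  - intros [Ha Hmax]; split; [exists a, x, y, z; auto |].
    intros s x' y' z' H1 H2 H3; apply tnorm_le_iff.
    rewrite !Hdist by assumption.
    specialize (Hmax x' y' z' H1 H2 H3); fold g in Ha, Hmax |- *; subst a.
    pose proof (pow2_ge_0 (s - tform T x' y' z')); nra.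
Qed.

Definition symt (a b c d : R) : tensor :=
  fun i j k =>
    match i, j, k with
    | i1, i1, i1 => a
    | i1, i1, i2 | i1, i2, i1 | i2, i1, i1 => b
    | i1, i2, i2 | i2, i1, i2 | i2, i2, i1 => c
    | i2, i2, i2 => d
    end.

Lemma is_sym_symt (T : tensor) :
  is_sym T -> T = symt (T i1 i1 i1) (T i1 i1 i2) (T i1 i2 i2) (T i2 i2 i2).
Proof.
  intros HT; apply tensor_ext; intros [] [] []; simpl; try reflexivity;
    match goal with |- T ?i ?j ?k = _ => destruct (HT i j k) as (? & ? & ? & ? & ?) end;
    congruence.
Qed.

Lemma tform_swap12 (T : tensor) (x y z : vec) :
  is_sym T -> tform T x y z = tform T y x z.
Proof. intros HT; rewrite (is_sym_symt T HT); unfold tform, symt, sum2; ring. Qed.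

Lemma tform_swap23 (T : tensor) (x y z : vec) :
  is_sym T -> tform T x y z = tform T x z y.
Proof. intros HT; rewrite (is_sym_symt T HT); unfold tform, symt, sum2; ring. Qed.

Lemma tform_vscale (T : tensor) (a b c : R) (x y z : vec) :
  tform T (vscale a x) (vscale b y) (vscale c z) = a * b * c * tform T x y z.
Proof. unfold tform, vscale, sum2; ring. Qed.

Lemma tform_axpy_l (T : tensor) (e : R) (u x y z : vec) :
  tform T (axpy e u x) y z = tform T x y z + e * tform T u y z.
Proof. unfold tform, axpy, sum2; ring. Qed.

Lemma tform_axpy_m (T : tensor) (e : R) (u x y z : vec) :
  tform T x (axpy e u y) z = tform T x y z + e * tform T x u z.
Proof. unfold tform, axpy, sum2; ring. Qed.

Lemma nrm_vscale (c : R) (x : vec) : nrm (vscale c x) = c ^ 2 * nrm x.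
Proof. unfold nrm, dot, vscale, sum2; ring. Qed.

Lemma nrm_axpy (e : R) (u x : vec) :
  nrm (axpy e u x) = nrm x + 2 * e * dot x u + e ^ 2 * nrm u.
Proof. unfold nrm, dot, axpy, sum2; ring. Qed.

Lemma tform_le_hom (T : tensor) (K : R) :
  tform_le T K -> forall p q r, tform T p q r ^ 2 <= K * nrm p * nrm q * nrm r.
Proof.
  intros HK p q r.
  destruct (polar_vec p) as (n & p' & Hn & Hp & ->).
  destruct (polar_vec q) as (m & q' & Hm & Hq & ->).
  destruct (polar_vec r) as (l & r' & Hl & Hr & ->).
  rewrite tform_vscale, !nrm_vscale.
  apply in_S1_nrm in Hp as Hp1; apply in_S1_nrm in Hq as Hq1; apply in_S1_nrm in Hr as Hr1.
  rewrite Hp1, Hq1, Hr1.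
  specialize (HK p' q' r' Hp Hq Hr).
  replace ((n * m * l * tform T p' q' r') ^ 2) with ((n * m * l) ^ 2 * tform T p' q' r' ^ 2)
    by ring.
  replace (K * (n ^ 2 * 1) * (m ^ 2 * 1) * (l ^ 2 * 1)) with ((n * m * l) ^ 2 * K) by ring.
  apply Rmult_le_compat_l; [apply pow2_ge_0 | exact HK].
Qed.

Lemma linear_coef_zero_of_nonneg (al be : R) :
  (forall e, 0 <= al * e + be * e ^ 2) -> al = 0.
Proof.
  intros H; destruct (Req_dec al 0) as [| Hal]; [assumption | exfalso].
  set (D := be ^ 2 + 1); assert (HD : 0 < D) by (unfold D; nra).
  specialize (H (- al / (2 * D))).
  replace (al * (- al / (2 * D)) + be * (- al / (2 * D)) ^ 2)
    with (al ^ 2 * (be - 2 * D) / (4 * D ^ 2)) in H by (field; lra).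
  assert (Hneg : al ^ 2 * (be - 2 * D) < 0)
    by (apply Rmult_pos_neg; [nra | unfold D; nra]).
  assert (0 < / (4 * D ^ 2)) by (apply Rinv_0_lt_compat; nra).
  unfold Rdiv in H; nra.
Qed.

(* First-order condition: compare with the perturbation [x + e u] for every [e]. *)
Lemma maximizer_stationary_l (T : tensor) (x y z : vec) :
  in_S1 x -> in_S1 y -> in_S1 z -> tform_le T (tform T x y z ^ 2) ->
  forall u, tform T x y z * tform T u y z = tform T x y z ^ 2 * dot x u.
Proof.
  intros Hx Hy Hz Hmax u.
  set (g := tform T x y z) in *; set (t := tform T u y z).
  enough (2 * (g ^ 2 * dot x u - g * t) = 0) by lra.
  apply (linear_coef_zero_of_nonneg _ (g ^ 2 * nrm u - t ^ 2)); intros e.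
  pose proof (tform_le_hom T _ Hmax (axpy e u x) y z) as H.
  rewrite tform_axpy_l, nrm_axpy in H; fold g t in H.
  apply in_S1_nrm in Hx, Hy, Hz; rewrite Hx, Hy, Hz in H.
  nra.
Qed.

Lemma maximizer_stationary (T : tensor) (x y z : vec) :
  is_sym T -> in_S1 x -> in_S1 y -> in_S1 z -> tform_le T (tform T x y z ^ 2) ->
  tform T x y z <> 0 ->
  (forall u, tform T u y z = tform T x y z * dot x u) /\
  (forall u, tform T x u z = tform T x y z * dot y u).
Proof.
  intros HT Hx Hy Hz Hmax Hg.
  split; intros u; apply (Rmult_eq_reg_l (tform T x y z)); auto.
  - rewrite maximizer_stationary_l by assumption; ring.
  - rewrite (tform_swap12 T x u z), (tform_swap12 T x y z) by assumption.
    rewrite (tform_swap12 T x y z) in Hmax by assumption.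
    rewrite maximizer_stationary_l by assumption; ring.
Qed.

Definition trv (T : tensor) : vec := fun k => T i1 i1 k + T i2 i2 k.
Definition perp (v : vec) : vec := mkv (- v i2) (v i1).

Lemma det_dot_trv (T : tensor) (x y z : vec) :
  is_sym T ->
  det x y * dot (trv T) z = tform T (perp x) y z - tform T x (perp y) z.
Proof.
  intros HT; rewrite (is_sym_symt T HT).
  unfold det, dot, trv, tform, perp, mkv, symt, sum2; ring.
Qed.

Lemma maximizer_trv_orth (T : tensor) (x y z : vec) :
  is_sym T -> in_S1 x -> in_S1 y -> in_S1 z -> tform_le T (tform T x y z ^ 2) ->
  tform T x y z <> 0 -> det x y <> 0 -> dot (trv T) z = 0.
Proof.
  intros HT Hx Hy Hz Hmax Hg Hd.
  destruct (maximizer_stationary T x y z) as [Hl Hm]; auto.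
  apply (Rmult_eq_reg_l (det x y)); auto.
  rewrite det_dot_trv, (Hl (perp x)), (Hm (perp y)) by assumption.
  unfold dot, perp, mkv, sum2; ring.
Qed.

Lemma det_of_parallel (a b z : vec) :
  in_S1 z -> det a z = 0 -> det b z = 0 -> det a b = 0.
Proof.
  intros Hz Ha Hb; apply in_S1_nrm in Hz.
  replace (det a b) with (det a b * nrm z) by (rewrite Hz; ring).
  replace (det a b * nrm z) with (det a z * dot b z - det b z * dot a z)
    by (unfold det, nrm, dot, sum2; ring).
  rewrite Ha, Hb; ring.
Qed.

Lemma vec_zero_of_dot (t z e : vec) :
  dot t z = 0 -> dot t e = 0 -> det e z <> 0 -> t i1 = 0 /\ t i2 = 0.
Proof.
  unfold dot, det, sum2; intros Hz He Hd; split;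
    apply (Rmult_eq_reg_r (e i1 * z i2 - e i2 * z i1)); auto.
  - replace (t i1 * (e i1 * z i2 - e i2 * z i1))
      with (z i2 * (t i1 * e i1 + t i2 * e i2) - e i2 * (t i1 * z i1 + t i2 * z i2)) by ring.
    rewrite Hz, He; ring.
  - replace (t i2 * (e i1 * z i2 - e i2 * z i1))
      with (e i1 * (t i1 * z i1 + t i2 * z i2) - z i1 * (t i1 * e i1 + t i2 * e i2)) by ring.
    rewrite Hz, He; ring.
Qed.

Lemma tform_axpy_diag (T : tensor) (eps : R) (x y z : vec) :
  is_sym T -> in_S1 x -> in_S1 y -> in_S1 z -> tform_le T (tform T x y z ^ 2) ->
  tform T x y z <> 0 -> eps = 1 \/ eps = -1 ->
  tform T (axpy eps y x) (axpy eps y x) z = eps * tform T x y z * nrm (axpy eps y x).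
Proof.
  intros HT Hx Hy Hz Hmax Hg He.
  destruct (maximizer_stationary T x y z) as [Hl Hm]; auto.
  rewrite tform_axpy_l, !tform_axpy_m, (Hm x), (Hl y), (tform_swap12 T y x z) by assumption.
  rewrite nrm_axpy; apply in_S1_nrm in Hx, Hy; rewrite Hx, Hy.
  unfold dot, sum2; destruct He as [-> | ->]; ring.
Qed.

(* The unit vector along [x + eps y] is part of a new maximizer [(w, z, w)]. *)
Lemma maximizer_trv_orth_axpy (T : tensor) (eps : R) (x y z : vec) :
  is_sym T -> in_S1 x -> in_S1 y -> in_S1 z -> tform_le T (tform T x y z ^ 2) ->
  tform T x y z <> 0 -> eps = 1 \/ eps = -1 -> det (axpy eps y x) z <> 0 ->
  dot (trv T) (axpy eps y x) = 0.
Proof.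
  intros HT Hx Hy Hz Hmax Hg He Hwz.
  pose proof (tform_axpy_diag T eps x y z HT Hx Hy Hz Hmax Hg He) as Hww.
  set (g := tform T x y z) in *.
  destruct (polar_vec (axpy eps y x)) as (n & w & Hn & Hw & Hnw); rewrite Hnw in *.
  assert (Hdet : det (vscale n w) z = n * det w z) by (unfold det, vscale; ring).
  assert (Hn0 : n <> 0) by (intros ->; apply Hwz; rewrite Hdet; ring).
  assert (Hval : tform T w z w = eps * g).
  { assert (E : tform T (vscale n w) (vscale n w) z = n * n * tform T w w z).
    { replace (n * n * tform T w w z) with (n * n * 1 * tform T w w z) by ring.
      rewrite <- (tform_vscale T n n 1); f_equal; apply vec_ext; unfold vscale; ring. }
    rewrite E, nrm_vscale in Hww; apply in_S1_nrm in Hw; rewrite Hw in Hww.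
    rewrite <- tform_swap23 by assumption.
    apply (Rmult_eq_reg_l (n * n)); [| apply Rmult_integral_contrapositive_currified; auto].
    rewrite Hww; ring. }
  assert (Hwmax : tform_le T (tform T w z w ^ 2)).
  { rewrite Hval; replace ((eps * g) ^ 2) with (g ^ 2) by (destruct He as [-> | ->]; ring).
    exact Hmax. }
  assert (Ht : dot (trv T) w = 0).
  { apply (maximizer_trv_orth T w z w); auto.
    - rewrite Hval; intros H; apply Rmult_integral in H as [H | H]; [destruct He; lra | auto].
    - intros H; apply Hwz; rewrite Hdet, H; ring. }
  replace (dot (trv T) (vscale n w)) with (n * dot (trv T) w) by (unfold dot, vscale, sum2; ring).
  rewrite Ht; ring.
Qed.

Lemma maximizer_traceless (T : tensor) (x y z : vec) :
  is_sym T -> in_S1 x -> in_S1 y -> in_S1 z -> tform_le T (tform T x y z ^ 2) ->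
  tform T x y z <> 0 -> det x y <> 0 -> trv T i1 = 0 /\ trv T i2 = 0.
Proof.
  intros HT Hx Hy Hz Hmax Hg Hd.
  assert (Hpm : forall eps, eps = 1 \/ eps = -1 -> det (axpy eps y x) z <> 0 ->
                  dot (trv T) (axpy eps y x) = 0)
    by (intros eps; apply (maximizer_trv_orth_axpy T eps x y z); assumption).
  assert (Hsum_diff : det (axpy 1 y x) (axpy (-1) y x) = -2 * det x y)
    by (unfold det, axpy; ring).
  assert (Horth := maximizer_trv_orth T x y z HT Hx Hy Hz Hmax Hg Hd).
  destruct (Req_dec (det (axpy 1 y x) z) 0) as [H1 | H1].
  - assert (H2 : det (axpy (-1) y x) z <> 0).
    { intros H2; pose proof (det_of_parallel _ _ z Hz H1 H2); lra. }
    apply (vec_zero_of_dot _ z (axpy (-1) y x)); auto.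
  - apply (vec_zero_of_dot _ z (axpy 1 y x)); auto.
Qed.

Lemma parallel_vscale (x y : vec) : in_S1 x -> det x y = 0 -> y = vscale (dot x y) x.
Proof.
  unfold in_S1, det, dot, vscale, sum2; intros Hx Hd; apply vec_ext.
  - transitivity (y i1 * (x i1 ^ 2 + x i2 ^ 2)); [rewrite Hx; ring |].
    replace (y i1 * (x i1 ^ 2 + x i2 ^ 2))
      with ((x i1 * y i1 + x i2 * y i2) * x i1 - x i2 * (x i1 * y i2 - x i2 * y i1)) by ring.
    rewrite Hd; ring.
  - transitivity (y i2 * (x i1 ^ 2 + x i2 ^ 2)); [rewrite Hx; ring |].
    replace (y i2 * (x i1 ^ 2 + x i2 ^ 2))
      with ((x i1 * y i1 + x i2 * y i2) * x i2 + x i1 * (x i1 * y i2 - x i2 * y i1)) by ring.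
    rewrite Hd; ring.
Qed.

Lemma rank1_parallel (a : R) (x y z : vec) :
  in_S1 x -> det x y = 0 -> det x z = 0 -> rank1 a x y z = rank1 (a * dot x y * dot x z) x x x.
Proof.
  intros Hx Hy Hz; rewrite (parallel_vscale x y), (parallel_vscale x z) at 1 by assumption.
  apply tensor_ext; intros i j k; unfold rank1, vscale; ring.
Qed.

Lemma rank1_cube_sym (a : R) (x : vec) : is_sym (rank1 a x x x).
Proof. intros i j k; unfold rank1; repeat split; ring. Qed.

Lemma rank1_sym_det (a : R) (x y z : vec) :
  a <> 0 -> in_S1 y -> in_S1 z -> is_sym (rank1 a x y z) -> det x y = 0 /\ det x z = 0.
Proof.
  intros Ha Hy Hz HB; unfold rank1 in HB; split.
  - apply (Rmult_eq_reg_l a); auto; rewrite Rmult_0_r.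
    apply (scalar_zero_of_in_S1 _ z Hz).
    + destruct (HB i1 i2 i1) as (_ & H & _); unfold det; lra.
    + destruct (HB i1 i2 i2) as (_ & H & _); unfold det; lra.
  - apply (Rmult_eq_reg_l a); auto; rewrite Rmult_0_r.
    apply (scalar_zero_of_in_S1 _ y Hy).
    + destruct (HB i1 i1 i2) as (_ & _ & _ & _ & H); unfold det; lra.
    + destruct (HB i1 i2 i2) as (_ & _ & _ & _ & H); unfold det; lra.
Qed.

Lemma traceless_symt (T : tensor) :
  is_sym T -> trv T i1 = 0 -> trv T i2 = 0 ->
  T = symt (T i1 i1 i1) (T i1 i1 i2) (- T i1 i1 i1) (- T i1 i1 i2).
Proof.
  intros HT H1 H2; rewrite (is_sym_symt T HT) in H1, H2 |- *.
  unfold trv in H1, H2; simpl in H1, H2; simpl.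
  f_equal; lra.
Qed.

Lemma symt_traceless_Ttheta (a b : R) :
  a <> 0 \/ b <> 0 ->
  exists c th, c <> 0 /\ 0 <= th < 2 * PI /\ symt a b (- a) (- b) = tscale c (Ttheta th).
Proof.
  intros Hab.
  destruct (polar_vec (mkv a b)) as (c & w & Hc & Hw & Hcw).
  destruct (angle_of_in_S1 w Hw) as (th & Hth & ->).
  assert (Ha : a = c * cos th) by exact (f_equal (fun v => v i1) Hcw).
  assert (Hb : b = c * sin th) by exact (f_equal (fun v => v i2) Hcw).
  exists c, th; split; [| split; [exact Hth |]].
  - intros ->; destruct Hab as [[] | []]; lra.
  - subst a b; apply tensor_ext; intros [] [] []; unfold tscale; simpl; ring.
Qed.

Lemma sym_best_rank1_nonsym (T : tensor) :
  is_sym T -> (exists B, best_rank1 T B /\ ~ is_sym B) ->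
  exists c th, c <> 0 /\ 0 <= th < 2 * PI /\ T = tscale c (Ttheta th).
Proof.
  intros HT (B & HB & Hns).
  destruct (proj1 HB) as (a & x & y & z & Hx & Hy & Hz & ->).
  apply best_rank1_rank1 in HB as [-> Hmax]; auto.
  set (g := tform T x y z) in *.
  assert (Hg : g <> 0).
  { intros H; apply Hns; rewrite H; intros i j k; unfold rank1; repeat split; ring. }
  assert (Htr : trv T i1 = 0 /\ trv T i2 = 0).
  { destruct (Req_dec (det x y) 0) as [Hxy | Hxy];
      [destruct (Req_dec (det x z) 0) as [Hxz | Hxz] |].
    - exfalso; apply Hns; rewrite rank1_parallel by assumption; apply rank1_cube_sym.
    - assert (Hswap : tform T x z y = g) by (symmetry; apply tform_swap23; exact HT).
      apply (maximizer_traceless T x z y); rewrite ?Hswap; assumption.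
    - apply (maximizer_traceless T x y z); assumption. }
  destruct Htr as [H1 H2].
  rewrite (traceless_symt T HT H1 H2).
  apply symt_traceless_Ttheta.
  destruct (Req_dec (T i1 i1 i1) 0) as [Ha | Ha]; [| left; exact Ha].
  destruct (Req_dec (T i1 i1 i2) 0) as [Hb | Hb]; [| right; exact Hb].
  exfalso; apply Hg; unfold g.
  rewrite (traceless_symt T HT H1 H2), Ha, Hb.
  unfold tform, symt, sum2; ring.
Qed.

Definition contract (T : tensor) (x y : vec) : vec :=
  fun k => sum2 (fun i => sum2 (fun j => T i j k * x i * y j)).

Lemma tform_contract (T : tensor) (x y z : vec) : tform T x y z = dot (contract T x y) z.
Proof. unfold tform, dot, contract, sum2; ring. Qed.

Lemma dot_sq_le (x y : vec) : dot x y ^ 2 <= nrm x * nrm y.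
Proof.
  replace (nrm x * nrm y) with (dot x y ^ 2 + det x y ^ 2)
    by (unfold nrm, dot, det, sum2; ring).
  pose proof (pow2_ge_0 (det x y)); lra.
Qed.

Lemma in_S1_dot_eq1 (x y : vec) : in_S1 x -> in_S1 y -> dot x y = 1 -> x = y.
Proof.
  unfold in_S1, dot, sum2; intros Hx Hy Hd.
  assert (H0 : (x i1 - y i1) ^ 2 + (x i2 - y i2) ^ 2 = 0).
  { replace ((x i1 - y i1) ^ 2 + (x i2 - y i2) ^ 2)
      with ((x i1 ^ 2 + x i2 ^ 2) + (y i1 ^ 2 + y i2 ^ 2) - 2 * (x i1 * y i1 + x i2 * y i2))
      by ring.
    rewrite Hx, Hy, Hd; ring. }
  pose proof (pow2_ge_0 (x i1 - y i1)); pose proof (pow2_ge_0 (x i2 - y i2)).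
  apply vec_ext; apply Rminus_diag_uniq; nra.
Qed.

Lemma nrm_contract_Ttheta (th : R) (x y : vec) :
  nrm (contract (Ttheta th) x y) = nrm x * nrm y.
Proof.
  transitivity ((cos th ^ 2 + sin th ^ 2) * (nrm x * nrm y)).
  - unfold nrm, dot, contract, Ttheta, sum2; ring.
  - pose proof (cos_sin_in_S1 th) as H; unfold in_S1, mkv in H; rewrite H; ring.
Qed.

Lemma contract_Ttheta_in_S1 (th : R) (x y : vec) :
  in_S1 x -> in_S1 y -> in_S1 (contract (Ttheta th) x y).
Proof.
  rewrite !in_S1_nrm, nrm_contract_Ttheta; intros -> ->; ring.
Qed.

Lemma tform_le_Ttheta (th : R) : tform_le (Ttheta th) 1.
Proof.
  intros x y z Hx Hy Hz; rewrite tform_contract.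
  pose proof (dot_sq_le (contract (Ttheta th) x y) z) as H.
  rewrite nrm_contract_Ttheta in H; apply in_S1_nrm in Hx, Hy, Hz.
  rewrite Hx, Hy, Hz in H; lra.
Qed.

Lemma tform_contract_Ttheta (th : R) (x y : vec) :
  in_S1 x -> in_S1 y -> tform (Ttheta th) x y (contract (Ttheta th) x y) = 1.
Proof.
  intros Hx Hy; rewrite tform_contract.
  apply in_S1_nrm, contract_Ttheta_in_S1; assumption.
Qed.

Lemma best_rank1_Ttheta (th a : R) (x y z : vec) :
  in_S1 x -> in_S1 y -> in_S1 z ->
  best_rank1 (Ttheta th) (rank1 a x y z) <-> a = tform (Ttheta th) x y z /\ a ^ 2 = 1.
Proof.
  intros Hx Hy Hz; rewrite best_rank1_rank1 by assumption.
  pose proof (tform_le_Ttheta th) as Hle.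
  split; intros [-> H]; split; try reflexivity.
  - apply Rle_antisym; [exact (Hle x y z Hx Hy Hz) |].
    specialize (H x x _ Hx Hx (contract_Ttheta_in_S1 th x x Hx Hx)).
    rewrite (tform_contract_Ttheta th x x Hx Hx) in H; lra.
  - rewrite H; exact Hle.
Qed.

Lemma best_rank1_Ttheta_third (th : R) (u v : vec) :
  in_S1 u -> in_S1 v ->
  exists! w, in_S1 w /\ best_rank1 (Ttheta th) (rank1 1 u v w).
Proof.
  intros Hu Hv; set (w := contract (Ttheta th) u v).
  assert (Hw : in_S1 w) by (apply contract_Ttheta_in_S1; assumption).
  exists w; split.
  - split; [exact Hw |]; apply best_rank1_Ttheta; auto.
    rewrite tform_contract_Ttheta by assumption; split; ring.
  - intros w' [Hw' Hbest]; apply best_rank1_Ttheta in Hbest as [H _]; auto.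
    apply in_S1_dot_eq1; auto; rewrite H, tform_contract; reflexivity.
Qed.

Definition rotate (c s : R) (p : vec) : vec :=
  mkv (c * p i1 - s * p i2) (s * p i1 + c * p i2).

Lemma rotate_in_S1 (c s : R) (p : vec) :
  in_S1 (mkv c s) -> in_S1 p -> in_S1 (rotate c s p).
Proof.
  unfold in_S1, rotate, mkv; intros Hcs Hp.
  replace ((c * p i1 - s * p i2) ^ 2 + (s * p i1 + c * p i2) ^ 2)
    with ((c ^ 2 + s ^ 2) * (p i1 ^ 2 + p i2 ^ 2)) by ring.
  rewrite Hcs, Hp; ring.
Qed.

Lemma rotate_opp_rotate (c s : R) (p : vec) :
  in_S1 (mkv c s) -> rotate c (- s) (rotate c s p) = p.
Proof.
  unfold in_S1, rotate, mkv; intros Hcs; apply vec_ext; simpl.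
  - transitivity ((c ^ 2 + s ^ 2) * p i1); [ring | rewrite Hcs; ring].
  - transitivity ((c ^ 2 + s ^ 2) * p i2); [ring | rewrite Hcs; ring].
Qed.

Lemma tform_Ttheta_rotate (th : R) (p : vec) :
  let v := rotate (cos (th / 3)) (sin (th / 3)) p in
  tform (Ttheta th) v v v = p i1 ^ 3 - 3 * p i1 * p i2 ^ 2.
Proof.
  intros v; unfold v.
  set (c := cos (th / 3)); set (s := sin (th / 3)).
  assert (Eth : th = 2 * (th / 3) + th / 3) by field.
  assert (Ecos : cos th = c ^ 3 - 3 * c * s ^ 2)
    by (rewrite Eth at 1; rewrite cos_plus, cos_2a, sin_2a; unfold c, s; ring).
  assert (Esin : sin th = 3 * c ^ 2 * s - s ^ 3)
    by (rewrite Eth at 1; rewrite sin_plus, cos_2a, sin_2a; unfold c, s; ring).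
  pose proof (cos_sin_in_S1 (th / 3)) as Hcs; unfold in_S1, mkv in Hcs; fold c s in Hcs.
  transitivity ((c ^ 2 + s ^ 2) ^ 3 * (p i1 ^ 3 - 3 * p i1 * p i2 ^ 2)).
  - unfold tform, Ttheta, rotate, mkv, sum2; rewrite Ecos, Esin; ring.
  - rewrite Hcs; ring.
Qed.

Lemma cubic_form_eq1_iff (p : vec) :
  in_S1 p /\ p i1 ^ 3 - 3 * p i1 * p i2 ^ 2 = 1 <->
  p = mkv 1 0 \/ p = mkv (-1/2) (sqrt 3 / 2) \/ p = mkv (-1/2) (- (sqrt 3 / 2)).
Proof.
  assert (Hr : (sqrt 3 / 2) ^ 2 = 3 / 4).
  { replace ((sqrt 3 / 2) ^ 2) with (sqrt 3 * sqrt 3 / 4) by field.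
    rewrite sqrt_sqrt; lra. }
  assert (Hr' : (- (sqrt 3 / 2)) ^ 2 = 3 / 4) by (rewrite <- Hr; ring).
  unfold in_S1; split.
  - intros [Hp H].
    assert (E : (p i1 - 1) * (2 * p i1 + 1) ^ 2 = 0).
    { replace ((p i1 - 1) * (2 * p i1 + 1) ^ 2)
        with ((p i1 ^ 3 - 3 * p i1 * p i2 ^ 2 - 1) + 3 * p i1 * (p i1 ^ 2 + p i2 ^ 2 - 1))
        by ring.
      rewrite H, Hp; ring. }
    apply Rmult_integral in E as [E | E].
    + left; apply vec_ext; simpl; nra.
    + assert (H1 : p i1 = -1/2) by nra.
      assert (E2 : (p i2 - sqrt 3 / 2) * (p i2 + sqrt 3 / 2) = 0) by nra.
      right; apply Rmult_integral in E2 as [E2 | E2]; [left | right];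
        apply vec_ext; simpl; lra.
  - intros [-> | [-> | ->]]; unfold mkv; cbv beta iota; rewrite ?Hr, ?Hr'; split; field.
Qed.

Lemma cube_inj (a b : R) : a ^ 3 = b ^ 3 -> a = b.
Proof.
  intros H.
  assert (E : (a - b) * ((2 * a + b) ^ 2 + 3 * b ^ 2) = 0)
    by (replace ((a - b) * ((2 * a + b) ^ 2 + 3 * b ^ 2)) with (4 * (a ^ 3 - b ^ 3)) by ring;
        rewrite H; ring).
  apply Rmult_integral in E as [E | E]; [lra |].
  pose proof (pow2_ge_0 (2 * a + b)); pose proof (pow2_ge_0 b).
  assert (b = 0) by nra; assert (2 * a + b = 0) by nra; lra.
Qed.

Lemma rank1_cube_inj (p q : vec) : rank1 1 p p p = rank1 1 q q q -> p = q.
Proof.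
  intros E; apply vec_ext; apply cube_inj;
    [pose proof (f_equal (fun T => T i1 i1 i1) E) | pose proof (f_equal (fun T => T i2 i2 i2) E)];
    unfold rank1 in *; simpl in *; lra.
Qed.

Lemma best_rank1_Ttheta_sym (th : R) (B : tensor) :
  best_rank1 (Ttheta th) B -> is_sym B ->
  exists v, in_S1 v /\ tform (Ttheta th) v v v = 1 /\ B = rank1 1 v v v.
Proof.
  intros HB HS.
  destruct (proj1 HB) as (a & x & y & z & Hx & Hy & Hz & ->).
  pose proof HB as HB'; apply best_rank1_Ttheta in HB' as [_ Ha]; auto.
  assert (Ha0 : a <> 0) by (intros ->; lra).
  destruct (rank1_sym_det a x y z Ha0 Hy Hz HS) as [Hxy Hxz].
  rewrite rank1_parallel in HB |- * by assumption.
  set (b := a * dot x y * dot x z) in *.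
  apply best_rank1_Ttheta in HB as [Hb Hb2]; auto.
  exists (vscale b x); repeat split.
  - apply in_S1_nrm; apply in_S1_nrm in Hx; rewrite nrm_vscale, Hx, Hb2; ring.
  - rewrite tform_vscale, <- Hb.
    replace (b * b * b * b) with (b ^ 2 * b ^ 2) by ring; rewrite Hb2; ring.
  - apply tensor_ext; intros i j k; unfold rank1, vscale.
    replace (1 * (b * x i) * (b * x j) * (b * x k)) with (b ^ 2 * b * x i * x j * x k) by ring.
    rewrite Hb2; ring.
Qed.

Lemma Ttheta_sym_best_rank1 (th : R) :
  exists B1 B2 B3 : tensor,
    B1 <> B2 /\ B1 <> B3 /\ B2 <> B3 /\
    best_rank1 (Ttheta th) B1 /\ is_sym B1 /\
    best_rank1 (Ttheta th) B2 /\ is_sym B2 /\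
    best_rank1 (Ttheta th) B3 /\ is_sym B3 /\
    (forall B, best_rank1 (Ttheta th) B -> is_sym B -> B = B1 \/ B = B2 \/ B = B3).
Proof.
  set (c := cos (th / 3)); set (s := sin (th / 3)).
  assert (Hcs : in_S1 (mkv c s)) by apply cos_sin_in_S1.
  set (cube := fun p => rank1 1 (rotate c s p) (rotate c s p) (rotate c s p)).
  set (q0 := mkv 1 0); set (q1 := mkv (-1/2) (sqrt 3 / 2)); set (q2 := mkv (-1/2) (- (sqrt 3 / 2))).
  assert (Hbest : forall p, p = q0 \/ p = q1 \/ p = q2 -> best_rank1 (Ttheta th) (cube p)).
  { intros p Hp; apply cubic_form_eq1_iff in Hp as [Hp Hval].
    apply best_rank1_Ttheta; try apply rotate_in_S1; auto.
    rewrite tform_Ttheta_rotate, Hval; split; ring. }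
  assert (Hneq : forall p q, p i1 <> q i1 \/ p i2 <> q i2 -> cube p <> cube q).
  { intros p q Hpq E; apply rank1_cube_inj in E.
    rewrite <- (rotate_opp_rotate c s p), <- (rotate_opp_rotate c s q), E in Hpq by assumption.
    destruct Hpq; auto. }
  assert (Hr0 : 0 < sqrt 3) by apply Rlt_sqrt3_0.
  exists (cube q0), (cube q1), (cube q2).
  refine (conj _ (conj _ (conj _ (conj (Hbest q0 _) (conj (rank1_cube_sym _ _)
    (conj (Hbest q1 _) (conj (rank1_cube_sym _ _)
    (conj (Hbest q2 _) (conj (rank1_cube_sym _ _) _))))))))); auto.
  - apply Hneq; left; unfold q0, q1, mkv; lra.
  - apply Hneq; left; unfold q0, q2, mkv; lra.
  - apply Hneq; right; unfold q1, q2, mkv; lra.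
  - intros B HB HS.
    destruct (best_rank1_Ttheta_sym th B HB HS) as (v & Hv & Hval & ->).
    assert (Hcs' : in_S1 (mkv c (- s))).
    { unfold in_S1, mkv in *; rewrite <- Hcs; ring. }
    set (p := rotate c (- s) v).
    assert (Hvp : v = rotate c s p).
    { unfold p; rewrite <- (Ropp_involutive s) at 1; symmetry.
      apply rotate_opp_rotate; exact Hcs'. }
    assert (Hp : in_S1 p) by (apply rotate_in_S1; assumption).
    rewrite Hvp in Hval |- *; rewrite tform_Ttheta_rotate in Hval.
    destruct (proj1 (cubic_form_eq1_iff p) (conj Hp Hval)) as [-> | [-> | ->]]; auto.
Qed.

Theorem theorem4p1 :
  (forall T : tensor, is_sym T ->
     (exists B, best_rank1 T B /\ ~ is_sym B) ->
     exists (c theta : R), c <> 0 /\ 0 <= theta < 2 * PI /\ T = tscale c (Ttheta theta))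
  /\
  (forall theta : R, 0 <= theta < 2 * PI ->
     (forall u v : vec, in_S1 u -> in_S1 v ->
        exists! w : vec, in_S1 w /\ best_rank1 (Ttheta theta) (rank1 1 u v w))
     /\
     (exists B1 B2 B3 : tensor,
        B1 <> B2 /\ B1 <> B3 /\ B2 <> B3 /\
        best_rank1 (Ttheta theta) B1 /\ is_sym B1 /\
        best_rank1 (Ttheta theta) B2 /\ is_sym B2 /\
        best_rank1 (Ttheta theta) B3 /\ is_sym B3 /\
        (forall B, best_rank1 (Ttheta theta) B -> is_sym B ->
           B = B1 \/ B = B2 \/ B = B3))).
Proof.
  split.
  - exact sym_best_rank1_nonsym.
  - intros theta _; split.
    + exact (best_rank1_Ttheta_third theta).
    + exact (Ttheta_sym_best_rank1 theta).
Qed.
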